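(* Let $\mathtt{L}\in\mathcal{L}$ be a line of $\mathbb{S}$ and let $\alpha\in P\cup P'$. If $\alpha$ has distance $3$ (in $\mathbb{S}$) from two points of $\mathtt{L}$, then $\alpha$ has distance $2$ from the third point of $\mathtt{L}$.
   Context: Let $S=(P,L)$ and $S'=(P',L')$ be generalized quadrangles of order $(2,2)$ (every line has 3 points, every point lies on 3 lines, and for each point $x$ and line $l\not\ni x$ exactly one point of $l$ is collinear with $x$), with an isomorphism $x\mapsto x'$ from $S$ to $S'$. In a point-line geometry, $x^{\perp}$ is $x$ together with all points collinear with $x$, and $A^{\perp}=\bigcap_{a\in A}a^{\perp}$. A triad is a set of three pairwise non-collinear points, complete if $|T^{\perp}|=3$. Let $\mathcal{P}=\{(x,y')\in P\times P':y'\in x'^{\perp}\}$ and $\mathcal{L}$ the set of all $3$-subsets $\{(x,u'),(y,v'),(z,w')\}$ of $\mathcal{P}$ where $T=\{x,y,z\}$ (three distinct points) is a line or complete triad of $S$ and $\{u',v',w'\}=T'^{\perp}$ in $S'$ with $u',v',w'$ distinct. The geometry $\mathbb{S}=(\mathbb{P},\mathbb{L})$ has point set $\mathbb{P}=\mathcal{P}\cup P\cup P'$ (disjoint union) and line set $\mathcal{L}\cup\{\{x,(x,u'),u'\}:(x,u')\in\mathcal{P}\}$. Distances are in the collinearity graph of $\mathbb{S}$. *)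

From mathcomp Require Import all_boot.
Set Implicit Arguments. Unset Strict Implicit. Unset Printing Implicit Defensive.

Section GQ.
Variable P : finType.
Variable L : {set {set P}}.

Definition perp (x : P) : {set P} :=
  x |: [set y | [exists l in L, (x \in l) && (y \in l)]].

Definition perpA (A : {set P}) : {set P} := \bigcap_(a in A) perp a.

Definition collinear (x y : P) : bool := (x != y) && (y \in perp x).

Definition is_GQ22 : Prop :=
  (forall l, l \in L -> #|l| = 3) /\
  (forall x : P, #|[set l in L | x \in l]| = 3) /\
  (forall (x : P) l, l \in L -> x \notin l ->
     #|[set y in l | collinear x y]| = 1).

Definition complete_triad (x y z : P) : bool :=
  [&& x != y, y != z, x != z,
      ~~ collinear x y, ~~ collinear y z, ~~ collinear x z &
      #|perpA [set x; y; z]| == 3].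
End GQ.

Definition is_iso (P P' : finType) (L : {set {set P}}) (L' : {set {set P'}})
  (f : P -> P') : Prop :=
  bijective f /\ forall l : {set P}, (l \in L) = (f @: l \in L').

(* The geometry SS: points are (P * P') + P + P' restricted to the valid ones. *)
Section Big.
Variables P P' : finType.
Variable L : {set {set P}}.
Variable L' : {set {set P'}}.
Variable f : P -> P'.

Definition BPt := ((P * P') + P + P')%type.

Definition pairPt (x : P) (y : P') : BPt := inl (inl (x, y)).
Definition leftPt (x : P) : BPt := inl (inr x).
Definition rightPt (y : P') : BPt := inr y.

Definition inCalP (x : P) (y : P') : bool := y \in perp L' (f x).

Definition calL_line (Ls : {set BPt}) : Prop :=
  exists (x y z : P) (u v w : P'),
    [/\ x != y, y != z & x != z] /\
    ([set x; y; z] \in L \/ complete_triad L x y z) /\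
    [/\ u != v, v != w & u != w] /\
    [set u; v; w] = perpA L' (f @: [set x; y; z]) /\
    [/\ inCalP x u, inCalP y v & inCalP z w] /\
    Ls = [set pairPt x u; pairPt y v; pairPt z w].

Definition short_line (Ls : {set BPt}) : Prop :=
  exists (x : P) (u : P'),
    inCalP x u /\ Ls = [set leftPt x; pairPt x u; rightPt u].

Definition BLine (Ls : {set BPt}) : Prop := calL_line Ls \/ short_line Ls.

Definition Badj (a b : BPt) : Prop :=
  a <> b /\ exists Ls, BLine Ls /\ a \in Ls /\ b \in Ls.

Fixpoint dist_le (n : nat) (a b : BPt) : Prop :=
  match n with
  | 0 => a = b
  | n'.+1 => dist_le n' a b \/ exists c, dist_le n' a c /\ Badj c b
  end.

Definition Bdist (a b : BPt) (n : nat) : Prop :=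
  dist_le n a b /\ forall m, m < n -> ~ dist_le m a b.

Definition inPuP' (a : BPt) : bool :=
  match a with inl (inl _) => false | _ => true end.
End Big.

(* Say that alpha is near the pair (s, t) when (alpha, t) (for alpha in P) or
   (s, alpha) (for alpha in P') belongs to calP.  If alpha is near (s, t), it is
   at distance at most 2 from it: in GQ(2,2) every pair of points is regular, so
   two points p <> q span a set {p, q}^perp^perp which, like its perp
   {p, q}^perp, is a line or a complete triad, and this yields a line of calL
   through (s, t) and a pair on a short line through alpha.  A line of calL has
   the form {(x, u), (y, v), (z, w)} with T = {x, y, z} and T'^perp = {u, v, w};
   every point of a GQ(2,2) is collinear with some point of a line or complete
   triad, so alpha is near one of these three pairs.  If alpha is at distance 3
   from two of them, it is therefore near the third, and not adjacent to it,
   since adjacency would make alpha near all three. *)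

From mathcomp Require Import all_boot.
Set Implicit Arguments. Unset Strict Implicit. Unset Printing Implicit Defensive.

(** * Triples in finite sets *)

Section Triples.
Variable T : finType.
Implicit Types (A : {set T}) (a b c x y : T).

Lemma set3P x a b c : reflect [\/ x = a, x = b | x = c] (x \in [set a; b; c]).
Proof.
rewrite !inE; apply: (iffP idP) => [/orP[/orP[]|]/eqP|[]->]; rewrite ?eqxx ?orbT //.
all: by move=> ->; constructor.
Qed.

Lemma set3_mem a b c : [/\ a \in [set a; b; c], b \in [set a; b; c] & c \in [set a; b; c]].
Proof. by rewrite !inE !eqxx !orbT. Qed.

Lemma eq_cards3 a b c : (#|[set a; b; c]| == 3) = [&& a != b, b != c & a != c].
Proof.
rewrite -setUA cardsU1 cardsU1 cards1 !inE.
by case: (a =P b); case: (b =P c); case: (a =P c).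
Qed.

Lemma cards3 a b c : a != b -> b != c -> a != c -> #|[set a; b; c]| = 3.
Proof. by move=> ab bc ac; apply/eqP; rewrite eq_cards3 ab bc ac. Qed.

Lemma cards3P2 A a b : #|A| = 3 -> a \in A -> b \in A -> a != b ->
  exists2 c, c \notin [set a; b] & A = [set a; b; c].
Proof.
move=> A3 aA bA ab.
have /cards1P[c Ac] : #|A :\ a :\ b| == 1.
  by move: A3; rewrite (cardsD1 a) (cardsD1 b (A :\ a)) !inE aA bA eq_sym ab /=
    => /eqP; rewrite !add1n !eqSS.
have : c \in A :\ a :\ b by rewrite Ac set11.
rewrite !inE => /and3P[cb ca cA]; exists c; first by rewrite !inE negb_or ca cb.
by rewrite -setUA -Ac setD1K ?setD1K // !inE eq_sym ab.
Qed.

Lemma cards3_other A a : #|A| = 3 -> exists2 b, b \in A & b != a.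
Proof.
move=> A3; have : 0 < #|A :\ a|.
  by move: A3; rewrite (cardsD1 a); case: (a \in A) => /eqP; rewrite ?add1n ?add0n ?eqSS => /eqP->.
by case/card_gt0P => b; rewrite !inE => /andP[ba bA]; exists b.
Qed.

Lemma cards3P A a : #|A| = 3 -> a \in A ->
  exists b c, [/\ a != b, b != c, a != c & A = [set a; b; c]].
Proof.
move=> A3 aA; have [b bA ba] := cards3_other a A3.
have [|c] := cards3P2 A3 aA bA; first by rewrite eq_sym.
rewrite !inE negb_or => /andP[ca cb] ->.
by exists b, c; split; rewrite // eq_sym.
Qed.

Lemma cards3_third A a b x y : #|A| = 3 -> a \in A -> b \in A -> a != b ->
  x \in A -> y \in A -> x \notin [set a; b] -> y \notin [set a; b] -> x = y.
Proof.
move=> A3 aA bA ab; have [c cab ->] := cards3P2 A3 aA bA ab.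
by move=> /set3P[]-> /set3P[]->; rewrite // !inE !eqxx ?orbT.
Qed.

Lemma set2_pigeon a b x y z : x \in [set a; b] -> y \in [set a; b] -> z \in [set a; b] ->
  [\/ x = y, x = z | y = z].
Proof. by move=> /set2P[]-> /set2P[]-> /set2P[]->; constructor. Qed.
End Triples.

(** * Generalized quadrangles of order (2,2) *)

Section GeneralizedQuadrangle.
Variables (P : finType) (L : {set {set P}}).
Hypothesis gqL : is_GQ22 L.
Local Notation perp := (perp L).
Local Notation perpA := (perpA L).
Implicit Types (x y z p q : P) (l m : {set P}) (A B T : {set P}).

Lemma perpE x y : (y \in perp x) = (y == x) || [exists l in L, (x \in l) && (y \in l)].
Proof. by rewrite /perp !inE. Qed.

Lemma perp_refl x : x \in perp x.
Proof. by rewrite perpE eqxx. Qed.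

Lemma perp_sym x y : (y \in perp x) = (x \in perp y).
Proof.
rewrite !perpE eq_sym; congr (_ || _).
by apply/existsP/existsP => -[l /and3P[]]; exists l; apply/and3P.
Qed.

Lemma line_perp l x y : l \in L -> x \in l -> y \in l -> y \in perp x.
Proof.
by move=> lL xl yl; rewrite perpE; apply/orP; right; apply/existsP; exists l; apply/and3P.
Qed.

Lemma perp_line x y : y \in perp x -> x != y -> exists2 l, l \in L & (x \in l) && (y \in l).
Proof.
rewrite perpE eq_sym => /orP[/eqP-> | /existsP[l /andP[lL xyl]]]; first by rewrite eqxx.
by exists l.
Qed.

Lemma card_line l : l \in L -> #|l| = 3.
Proof. by case: gqL => h _; apply: h. Qed.

Lemma card_lines_through x : #|[set l in L | x \in l]| = 3.
Proof. by case: gqL => _ []. Qed.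

Lemma card_line_perp l x : l \in L -> x \notin l -> #|[set y in l | y \in perp x]| = 1.
Proof.
move=> lL xl; case: gqL => _ [_ h]; rewrite -(h x l lL xl); apply: eq_card => y.
rewrite /collinear !inE -perpE; case yl: (y \in l) => //=.
by have -> : x != y by apply: contraNneq xl => ->.
Qed.

Lemma line_perp_uniq l x y1 y2 : l \in L -> x \notin l -> y1 \in l -> y2 \in l ->
  y1 \in perp x -> y2 \in perp x -> y1 = y2.
Proof.
move=> lL xl y1l y2l y1x y2x; have /eqP/cards1P[q ql] := card_line_perp lL xl.
have : y1 \in [set y in l | y \in perp x] by rewrite inE y1l y1x.
have : y2 \in [set y in l | y \in perp x] by rewrite inE y2l y2x.
by rewrite ql !inE => /eqP-> /eqP->.
Qed.

(* For a line [l], [proj l x] is the point of [l] collinear with [x] (an arbitrary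
   point of [l] when [x \in l]); the default [x] is never returned. *)
Definition proj l x : P := odflt x [pick y in l | y \in perp x].

Lemma proj_spec l x : l \in L -> proj l x \in l /\ proj l x \in perp x.
Proof.
move=> lL; rewrite /proj; case: pickP => [y /andP[]//|none].
have [xl|xl] := boolP (x \in l); first by have := none x; rewrite xl perp_refl.
have /eqP/cards1P[q ql] := card_line_perp lL xl.
have : q \in [set y in l | y \in perp x] by rewrite ql set11.
by rewrite inE (none q).
Qed.

Lemma proj_uniq l x y : l \in L -> x \notin l -> y \in l -> y \in perp x -> y = proj l x.
Proof.
move=> lL xl yl yx; have [pl px] := proj_spec x lL.
exact: (line_perp_uniq lL xl yl pl yx px).
Qed.

Lemma lines_eq l1 l2 x y : l1 \in L -> l2 \in L -> x != y ->
  x \in l1 -> y \in l1 -> x \in l2 -> y \in l2 -> l1 = l2.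
Proof.
move=> l1L l2L xy x1 y1 x2 y2; apply/eqP; rewrite eq_sym eqEcard !card_line // leqnn andbT.
apply/subsetP => q q2; apply/negPn/negP => q1.
by move/eqP: xy; apply; apply: (line_perp_uniq l1L q1 x1 y1); apply: (line_perp l2L).
Qed.

Lemma perp2_line l x y q : l \in L -> x \in l -> y \in l -> x != y ->
  q \in perp x -> q \in perp y -> q \in l.
Proof.
move=> lL xl yl xy qx qy; apply/negPn/negP => ql.
by move/eqP: xy; apply; apply: (line_perp_uniq lL ql); rewrite // perp_sym.
Qed.

Lemma perpAP A q : reflect {in A, forall a, q \in perp a} (q \in perpA A).
Proof. exact: bigcapP. Qed.

Lemma in_perpA2 x y q : (q \in perpA [set x; y]) = (q \in perp x) && (q \in perp y).
Proof.
apply/perpAP/andP => [h | [qx qy] a /set2P[]->//].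
by split; apply: h; rewrite !inE eqxx ?orbT.
Qed.

Lemma perpAS A B : A \subset B -> perpA B \subset perpA A.
Proof. by move=> AB; apply/subsetP => q /perpAP qB; apply/perpAP => a /(subsetP AB)/qB. Qed.

Lemma sub_perpAK A : A \subset perpA (perpA A).
Proof.
apply/subsetP => a aA; apply/perpAP => q /perpAP qA.
by rewrite perp_sym; apply: qA.
Qed.

Lemma perpA_line l : l \in L -> perpA l = l.
Proof.
move=> lL; apply/setP => q; apply/perpAP/idP => [ql | ql a al]; last exact: (line_perp lL).
have [x xl] : exists x, x \in l by apply/card_gt0P; rewrite card_line.
have [y [z [xy _ _ lE]]] := cards3P (card_line lL) xl.
have yl : y \in l by rewrite lE !inE eqxx orbT.
by apply: (perp2_line lL xl yl xy); apply: ql.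
Qed.

Lemma perpA2_line l x y : l \in L -> x \in l -> y \in l -> x != y -> perpA [set x; y] = l.
Proof.
move=> lL xl yl xy; apply/setP => q; rewrite in_perpA2.
apply/andP/idP => [[]|ql]; first exact: perp2_line.
by split; rewrite perp_sym; apply: (line_perp lL ql).
Qed.

Lemma card_perpA2 x y : y \notin perp x -> #|perpA [set x; y]| = 3.
Proof.
move=> nxy; have yx q : q \in perp y -> x != q.
  by move=> qy; apply: contraNneq nxy => xq; rewrite perp_sym xq.
have -> : perpA [set x; y] = (proj^~ y) @: [set l in L | x \in l].
  apply/setP => q; rewrite in_perpA2; apply/andP/imsetP => [[qx qy] | [l]].
    have [l lL /andP[xl ql]] := perp_line qx (yx q qy).
    exists l; first by rewrite inE lL xl.
    by apply: proj_uniq => //; apply: contra nxy; apply: line_perp.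
  rewrite inE => /andP[lL xl] ->; have [pl py] := proj_spec y lL.
  by split; first exact: (line_perp lL).
rewrite card_in_imset ?card_lines_through // => l1 l2.
rewrite !inE => /andP[l1L x1] /andP[l2L x2] e12.
have [p1 py] := proj_spec y l1L; have [p2 _] := proj_spec y l2L.
by apply: (lines_eq l1L l2L (yx _ py) x1 p1 x2); rewrite e12.
Qed.

Lemma perpA2_noncol x y a b : y \notin perp x -> a \in perpA [set x; y] ->
  b \in perpA [set x; y] -> a != b -> b \notin perp a.
Proof.
rewrite !in_perpA2 => nxy /andP[ax ay] /andP[bx b_y] ab; apply/negP => ba.
have [l lL /andP[al bl]] := perp_line ba ab.
have xl : x \in l by apply: (perp2_line lL al bl ab); rewrite perp_sym.
have yl : y \in l by apply: (perp2_line lL al bl ab); rewrite perp_sym.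
by rewrite (line_perp lL xl yl) in nxy.
Qed.

Lemma card_perpA_le A a b : a \in A -> b \in A -> b \notin perp a -> #|perpA A| <= 3.
Proof.
move=> aA bA nab; rewrite -(card_perpA2 nab); apply/subset_leq_card/perpAS.
by apply/subsetP => q /set2P[]->.
Qed.

(* If the projections differed, the point of the line through [b] and [proj m b]
   collinear with [c] and the point of the line through [c] and [proj m c]
   collinear with [b] would both be the third point of [{b, c}^perp] besides [x]
   and [y]; collinear with two points of [m], it would lie on [m] and thus be
   [proj m b], which would then be collinear with [c]. *)
Lemma proj_perpA2_eq m b c x y : m \in L -> b \notin m -> c \notin m -> c \notin perp b ->
  x != y -> x \in perpA [set b; c] -> y \in perpA [set b; c] ->
  x \notin perp (proj m b) -> y \notin perp (proj m b) ->
  x \notin perp (proj m c) -> y \notin perp (proj m c) -> proj m b = proj m c.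
Proof.
move=> mL bm cm nbc xy xbc ybc xb1 yb1 xc1 yc1.
have [b1m b1b] := proj_spec b mL; have [c1m c1c] := proj_spec c mL.
set b1 := proj m b in b1m b1b xb1 yb1 *; set c1 := proj m c in c1m c1c xc1 yc1 *.
apply/eqP/negP => /negP nb1c1.
have [n nL /andP[bn b1n]] : exists2 n, n \in L & (b \in n) && (b1 \in n).
  by apply: perp_line b1b _; apply: contraNneq bm => ->.
have [n' n'L /andP[cn' c1n']] : exists2 n', n' \in L & (c \in n') && (c1 \in n').
  by apply: perp_line c1c _; apply: contraNneq cm => ->.
have cn : c \notin n by apply: contra nbc; apply: line_perp.
have bn' : b \notin n' by apply: contra nbc => bn'; rewrite perp_sym (line_perp n'L cn').
have [b2n b2c] := proj_spec c nL; have [c2n' c2b] := proj_spec b n'L.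
set b2 := proj n c in b2n b2c *; set c2 := proj n' b in c2n' c2b *.
have off_xy l q q1 : l \in L -> q \in l -> q1 \in l -> x \notin perp q1 -> y \notin perp q1 ->
    q \notin [set x; y].
  move=> lL ql q1l xq1 yq1; rewrite !inE negb_or; apply/andP; split.
    by apply: contraNneq xq1 => <-; apply: (line_perp lL q1l ql).
  by apply: contraNneq yq1 => <-; apply: (line_perp lL q1l ql).
have b2_bc : b2 \in perpA [set b; c] by rewrite in_perpA2 b2c (line_perp nL bn b2n).
have c2_bc : c2 \in perpA [set b; c] by rewrite in_perpA2 c2b (line_perp n'L cn' c2n').
have b2c2 : b2 = c2 := cards3_third (card_perpA2 nbc) xbc ybc xy b2_bc c2_bc
  (off_xy _ _ _ nL b2n b1n xb1 yb1) (off_xy _ _ _ n'L c2n' c1n' xc1 yc1).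
have b2m : b2 \in m.
  apply: (perp2_line mL b1m c1m nb1c1); first exact: (line_perp nL b1n).
  by rewrite b2c2; apply: (line_perp n'L c1n').
have b2b : b2 \in perp b by rewrite b2c2.
have b1c : b1 \in perp c by rewrite -(line_perp_uniq mL bm b2m b1m b2b b1b).
by rewrite (line_perp_uniq mL cm b1m c1m b1c c1c) eqxx in nb1c1.
Qed.

Lemma line_avoiding x y a : y \notin perp x -> a \in perp x -> a \in perp y ->
  exists2 m, m \in L & [&& a \in m, x \notin m & y \notin m].
Proof.
move=> nxy ax ay.
have ax' : a != x by apply: contraNneq nxy => <-; rewrite perp_sym.
have ay' : a != y by apply: contraNneq nxy => <-.
have [la laL /andP[ala xla]] : exists2 la, la \in L & (a \in la) && (x \in la).
  by apply: perp_line ax'; rewrite perp_sym.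
have [ly lyL /andP[aly yly]] : exists2 ly, ly \in L & (a \in ly) && (y \in ly).
  by apply: perp_line ay'; rewrite perp_sym.
have la_ly : la != ly by apply: contraNneq nxy => e; rewrite (line_perp lyL) // -e.
have laA : la \in [set l in L | a \in l] by rewrite inE laL ala.
have lyA : ly \in [set l in L | a \in l] by rewrite inE lyL aly.
have [m mla linesE] := cards3P2 (card_lines_through a) laA lyA la_ly.
have : m \in [set l in L | a \in l] by rewrite linesE !inE eqxx !orbT.
rewrite inE => /andP[mL am]; move: mla; rewrite !inE negb_or => /andP[mla mly].
exists m; rewrite // am /=; apply/andP; split.
  by apply: contra mla => xm; apply/eqP/(lines_eq mL laL ax' am xm ala xla).
by apply: contra mly => ym; apply/eqP/(lines_eq mL lyL ay' am ym aly yly).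
Qed.

(* [z] is a third point of [{x, y}^perp^perp]: all pairs of points are regular. *)
Lemma regular x y : y \notin perp x ->
  exists z, [/\ z \notin perp x, z \notin perp y & perpA [set x; y] \subset perp z].
Proof.
move=> nxy; have xy : x != y by apply: contraNneq nxy => ->; apply: perp_refl.
have [a aX] : exists a, a \in perpA [set x; y] by apply/card_gt0P; rewrite card_perpA2.
have [b [c [ab bc ac XE]]] := cards3P (card_perpA2 nxy) aX.
have [_ bX cX] := set3_mem a b c; rewrite -XE in bX cX.
have nab := perpA2_noncol nxy aX bX ab; have nac := perpA2_noncol nxy aX cX ac.
have nbc := perpA2_noncol nxy bX cX bc.
move: (aX); rewrite in_perpA2 => /andP[ax ay].
have [m mL /and3P[am xm ym]] := line_avoiding nxy ax ay.
have off_m q : q \in m -> q != a -> x \notin perp q /\ y \notin perp q.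
  move=> qm qa; rewrite !(perp_sym q); split; apply: contra qa => qxy; apply/eqP.
    exact: (line_perp_uniq mL xm qm am qxy ax).
  exact: (line_perp_uniq mL ym qm am qxy ay).
have bm : b \notin m by apply: contra nab; apply: line_perp.
have cm : c \notin m by apply: contra nac; apply: line_perp.
have [b1m b1b] := proj_spec b mL; have [c1m c1c] := proj_spec c mL.
have [xb1 yb1] : x \notin perp (proj m b) /\ y \notin perp (proj m b).
  by apply: off_m b1m _; apply: contraNneq nab => <-; rewrite perp_sym.
have [xc1 yc1] : x \notin perp (proj m c) /\ y \notin perp (proj m c).
  by apply: off_m c1m _; apply: contraNneq nac => <-; rewrite perp_sym.
move: bX cX; rewrite !in_perpA2 -!(perp_sym b) -!(perp_sym c) => /andP[xb yb] /andP[xc yc].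
have b1c1 : proj m b = proj m c.
  by apply: (proj_perpA2_eq mL bm cm nbc xy); rewrite // in_perpA2 ?xb ?yb.
exists (proj m b); split; rewrite 1?perp_sym //.
rewrite XE; apply/subsetP => q /set3P[]->; rewrite perp_sym //; last by rewrite b1c1.
exact: (line_perp mL am).
Qed.

Lemma card_perpA2K_le x y : y \notin perp x -> #|perpA (perpA [set x; y])| <= 3.
Proof.
move=> nxy; have [u uX] : exists u, u \in perpA [set x; y] by apply/card_gt0P; rewrite card_perpA2.
have [v vX vu] := cards3_other u (card_perpA2 nxy).
by apply: (card_perpA_le uX vX); apply: (perpA2_noncol nxy uX vX); rewrite eq_sym.
Qed.

Definition ctriad T : bool :=
  [&& #|T| == 3, [forall a in T, forall b in T, ~~ collinear L a b] & #|perpA T| == 3].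

Lemma ctriadP T : reflect
  [/\ #|T| = 3, {in T &, forall a b, a != b -> b \notin perp a} & #|perpA T| = 3] (ctriad T).
Proof.
apply: (iffP and3P) => [[/eqP T3 /forall_inP nc /eqP B3] | [-> nc ->]]; split => //.
  move=> a b aT bT ab; move/forall_inP: (nc a aT) => /(_ b bT).
  by rewrite /collinear ab.
apply/forall_inP => a aT; apply/forall_inP => b bT; rewrite /collinear negb_and negbK.
by case: eqVneq => //= ab; apply: nc.
Qed.

Lemma complete_triadE x y z : complete_triad L x y z = ctriad [set x; y; z].
Proof.
have col_sym a b : collinear L a b = collinear L b a by rewrite /collinear eq_sym perp_sym.
have col_irr a : ~~ collinear L a a by rewrite /collinear eqxx.
have [xT yT zT] := set3_mem x y z.
rewrite /complete_triad /ctriad eq_cards3.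
have -> : [forall a in [set x; y; z], forall b in [set x; y; z], ~~ collinear L a b] =
          [&& ~~ collinear L x y, ~~ collinear L y z & ~~ collinear L x z].
  apply/forall_inP/and3P => [nc | [nxy nyz nxz] a aT].
    by split; [move: (nc x xT) | move: (nc y yT) | move: (nc x xT)] => /forall_inP; apply.
  apply/forall_inP => b bT.
  by case/set3P: aT => ->; case/set3P: bT => ->; rewrite ?col_irr // col_sym.
by rewrite -!andbA.
Qed.

Lemma ctriad_perpA2 T a b : ctriad T -> a \in T -> b \in T -> a != b ->
  perpA [set a; b] = perpA T.
Proof.
case/ctriadP => _ nc B3 aT bT ab; apply/eqP; rewrite eq_sym eqEcard B3.
rewrite card_perpA2 ?nc // leqnn andbT perpAS //.
by apply/subsetP => q /set2P[]->.
Qed.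

Lemma ctriad_perp T : ctriad T -> ctriad (perpA T) /\ perpA (perpA T) = T.
Proof.
move=> tT; have /ctriadP[T3 nc B3] := tT.
have [a aT] : exists a, a \in T by apply/card_gt0P; rewrite T3.
have [b bT ba] := cards3_other a T3; have ab : a != b by rewrite eq_sym.
have BE := ctriad_perpA2 tT aT bT ab.
have BBT : perpA (perpA T) = T.
  apply/eqP; rewrite eq_sym eqEcard sub_perpAK T3 -BE.
  exact: (card_perpA2K_le (nc _ _ aT bT ab)).
split => //; apply/ctriadP; split; rewrite ?BBT //.
by rewrite -BE => u v uB vB; apply: perpA2_noncol (nc _ _ aT bT ab) uB vB.
Qed.

Lemma ctriad_perpA2_noncol x y : y \notin perp x -> ctriad (perpA [set x; y]).
Proof.
move=> nxy; apply/ctriadP; split; first exact: card_perpA2.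
  by move=> u v; apply: perpA2_noncol.
have [z [zx zy Xz]] := regular nxy.
apply/eqP; rewrite eqn_leq card_perpA2K_le //=.
have xz : x != z by apply: contraNneq zx => <-; apply: perp_refl.
have yz : y != z by apply: contraNneq zy => <-; apply: perp_refl.
have xy : x != y by apply: contraNneq nxy => ->; apply: perp_refl.
rewrite -(cards3 xy yz xz); apply/subset_leq_card/subsetP => q /set3P[]->.
- by apply: (subsetP (sub_perpAK _)); rewrite !inE eqxx.
- by apply: (subsetP (sub_perpAK _)); rewrite !inE eqxx orbT.
- by apply/perpAP => a /(subsetP Xz); rewrite perp_sym.
Qed.

Lemma mem_perpA_ctriad T u w q : ctriad T -> u \in T -> w \in T -> u != w ->
  q \in perp u -> q \in perp w -> q \in perpA T.
Proof. by move=> tT uT wT uw qu qw; rewrite -(ctriad_perpA2 tT uT wT uw) in_perpA2 qu qw. Qed.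

Lemma ctriad_cover_perp T p t : ctriad T -> t \in T -> p \in perp t ->
  exists2 v, v \in perpA T & p \in perp v.
Proof.
move=> tT tT' pt; have /ctriadP[T3 nc B3] := tT.
have [b [c [tb bc tc TE]]] := cards3P T3 tT'; have [_ bT cT] := set3_mem t b c.
rewrite -TE in bT cT.
have [<- | tp] := eqVneq t p.
  have [v vB] : exists v, v \in perpA T by apply/card_gt0P; rewrite B3.
  by exists v => //; rewrite perp_sym; apply: (perpAP _ _ vB).
have [pb | npb] := boolP (p \in perp b).
  by exists p; rewrite ?perp_refl // (mem_perpA_ctriad tT tT' bT tb).
have [pc | npc] := boolP (p \in perp c).
  by exists p; rewrite ?perp_refl // (mem_perpA_ctriad tT tT' cT tc).
have [l lL /andP[tl pl]] := perp_line pt tp.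
have [k kl lE] := cards3P2 (card_line lL) tl pl tp.
have to_k u : u \in T -> t != u -> p \notin perp u -> proj l u = k.
  move=> uT tu pu; have [ul up] := proj_spec u lL; move: ul up.
  rewrite lE => /set3P[-> | -> | //] tpu; last by rewrite tpu in pu.
  by rewrite perp_sym (negbTE (nc _ _ tT' uT tu)) in tpu.
have [kl' kb] := proj_spec b lL; have [_ kc] := proj_spec c lL.
rewrite !to_k // in kl' kb kc.
exists k; first exact: (mem_perpA_ctriad tT bT cT bc).
by apply: (line_perp lL kl'); rewrite lE !inE eqxx orbT.
Qed.

Lemma ctriad_cover T p : ctriad T -> exists2 v, v \in perpA T & p \in perp v.
Proof.
move=> tT; have /ctriadP[T3 _ _] := tT.
have [/exists_inP[t tT' pt] | far] := boolP [exists t in T, p \in perp t].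
  exact: (ctriad_cover_perp tT tT' pt).
have [l lL pl] : exists2 l, l \in L & p \in l.
  have /card_gt0P[l] : 0 < #|[set l in L | p \in l]| by rewrite card_lines_through.
  by rewrite inE => /andP[]; exists l.
have [k1 [k2 [pk1 _ pk2 lE]]] := cards3P (card_line lL) pl.
have to_k u : u \in T -> proj l u \in [set k1; k2].
  move=> uT; have [ul up] := proj_spec u lL; move: ul up; rewrite lE => /set3P[]-> pu.
  - by exfalso; move/negP: far; apply; apply/exists_inP; exists u.
  - by rewrite !inE eqxx.
  - by rewrite !inE eqxx orbT.
have [a aT] : exists a, a \in T by apply/card_gt0P; rewrite T3.
have [b [c [ab bc ac TE]]] := cards3P T3 aT; have [_ bT cT] := set3_mem a b c.
rewrite -TE in bT cT.
have common u w : u \in T -> w \in T -> u != w -> proj l u = proj l w ->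
    exists2 v, v \in perpA T & p \in perp v.
  move=> uT wT uw e; have [ul uu] := proj_spec u lL; have [_ ww] := proj_spec w lL.
  exists (proj l u); last by rewrite perp_sym (line_perp lL pl ul).
  by apply: (mem_perpA_ctriad tT uT wT uw); rewrite // e.
by case: (set2_pigeon (to_k _ aT) (to_k _ bT) (to_k _ cT)); apply: common.
Qed.

(* The sets [T] allowed in the definition of the lines of [calL]. *)
Definition block T : bool := (T \in L) || ctriad T.

Lemma block_card T : block T -> #|T| = 3.
Proof. by case/orP => [/card_line | /ctriadP[]]. Qed.

Lemma block_perp T : block T -> block (perpA T) /\ perpA (perpA T) = T.
Proof.
case/orP => [TL | /ctriad_perp[tB BBT]]; last by rewrite /block tB orbT.
by rewrite !perpA_line // /block TL.
Qed.

Lemma block_perpA2 x y : x != y -> block (perpA [set x; y]).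
Proof.
move=> xy; have [yx | nxy] := boolP (y \in perp x).
  by have [l lL /andP[xl yl]] := perp_line yx xy; rewrite /block (perpA2_line lL xl yl xy) lL.
by rewrite /block ctriad_perpA2_noncol ?orbT.
Qed.

Lemma block_cover T p : block T -> exists2 v, v \in T & p \in perp v.
Proof.
case/orP => [TL | tT].
  have [pT | pT] := boolP (p \in T); first by exists p; rewrite ?perp_refl.
  by have [vT vp] := proj_spec p TL; exists (proj T p); rewrite // perp_sym.
by have [tB <-] := ctriad_perp tT; apply: ctriad_cover.
Qed.
End GeneralizedQuadrangle.

(** * Transport along the isomorphism *)

Section Isomorphism.
Variables (P P' : finType) (L : {set {set P}}) (L' : {set {set P'}}) (f : P -> P').
Hypothesis isoF : is_iso L L' f.
Implicit Types (A : {set P}) (x y : P).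

Lemma iso_inj : injective f.
Proof. by case: isoF => /bij_inj. Qed.

Lemma iso_surj (y : P') : exists x, y = f x.
Proof. by case: isoF => [[g _ gK]] _; exists (g y); rewrite gK. Qed.

Lemma iso_perp x y : (f y \in perp L' (f x)) = (y \in perp L x).
Proof.
rewrite !perpE (inj_eq iso_inj); congr (_ || _).
case: isoF => [[g fK gK]] lineE; apply/exists_inP/exists_inP => -[l lL /andP[xl yl]].
  exists (g @: l); last by apply/andP; split; apply/imsetP; [exists (f x) | exists (f y)].
  by rewrite lineE -imset_comp (eq_imset (g := id)) ?imset_id.
by exists (f @: l); rewrite -?lineE // !imset_f.
Qed.

Lemma iso_perpA A : perpA L' (f @: A) = f @: perpA L A.
Proof.
apply/setP => y'; have [y ->] := iso_surj y'; rewrite mem_imset; last exact: iso_inj.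
apply/perpAP/perpAP => [yA a aA | yA _ /imsetP[a aA ->]].
  by rewrite -iso_perp; apply/yA/imset_f.
by rewrite iso_perp; apply: yA.
Qed.

Lemma iso_ctriad A : ctriad L' (f @: A) = ctriad L A.
Proof.
have iso_col x y : collinear L' (f x) (f y) = collinear L x y.
  by rewrite /collinear (inj_eq iso_inj) iso_perp.
rewrite /ctriad iso_perpA !card_in_imset; try by move=> ? ? _ _; apply: iso_inj.
congr [&& _, _ & _]; apply/forall_inP/forall_inP => [nc a aA | nc _ /imsetP[a aA ->]].
  apply/forall_inP => b bA; rewrite -iso_col.
  by move/forall_inP: (nc _ (imset_f f aA)); apply; apply: imset_f.
by apply/forall_inP => _ /imsetP[b bA ->]; rewrite iso_col; move/forall_inP: (nc a aA); apply.
Qed.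

Lemma iso_block A : block L' (f @: A) = block L A.
Proof. by case: isoF => _ lineE; rewrite /block iso_ctriad lineE. Qed.
End Isomorphism.

(** * Distances in the geometry [S] *)

Section Geometry.
Variables (P P' : finType) (L : {set {set P}}) (L' : {set {set P'}}) (f : P -> P').
Hypotheses (gqL' : is_GQ22 L') (isoF : is_iso L L' f).
Local Notation leftPt := (@leftPt P P').
Local Notation rightPt := (@rightPt P P').
Local Notation adj := (Badj L L' f).
Local Notation dist_le := (dist_le L L' f).
Local Notation calL_line := (calL_line L L' f).
Local Notation inCalP := (inCalP L' f).
Implicit Types (alpha e : BPt P P') (Ls : {set BPt P P'}) (T : {set P'}).

Definition near alpha e : bool :=
  match alpha, e with
  | inl (inr p), inl (inl (_, t)) => inCalP p t
  | inr p', inl (inl (s, _)) => inCalP s p'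
  | _, _ => false
  end.

Lemma adj_leftPt s t : inCalP s t -> adj (leftPt s) (pairPt s t).
Proof.
move=> st; split => //; exists [set leftPt s; pairPt s t; rightPt t].
by split; [right; exists s, t | rewrite !inE !eqxx ?orbT].
Qed.

Lemma adj_rightPt s t : inCalP s t -> adj (rightPt t) (pairPt s t).
Proof.
move=> st; split => //; exists [set leftPt s; pairPt s t; rightPt t].
by split; [right; exists s, t | rewrite !inE !eqxx ?orbT].
Qed.

Lemma adj_calL_line Ls e1 e2 : calL_line Ls -> e1 \in Ls -> e2 \in Ls -> e1 != e2 -> adj e1 e2.
Proof. by move=> lineLs e1L e2L /eqP e12; split => //; exists Ls; split; first left. Qed.

Lemma adj_pairPt alpha s t : inPuP' alpha -> adj alpha (pairPt s t) ->
  alpha = leftPt s \/ alpha = rightPt t.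
Proof.
move=> alphaPP' [_ [Ls [[lineLs | [x [u [_ LsE]]]] [aLs eLs]]]].
  case: lineLs => [x [y [z [u [v [w [_ [_ [_ [_ [_ LsE]]]]]]]]]]].
  by move: aLs alphaPP'; rewrite LsE => /set3P[]->.
move: aLs eLs alphaPP'; rewrite LsE => /set3P[]-> /set3P[] // [-> ->] //= _.
- by left.
- by right.
Qed.

Lemma dist_le2_adj alpha e : adj alpha e -> dist_le 2 alpha e.
Proof. by move=> ae /=; left; right; exists alpha. Qed.

Lemma dist_le2_adj2 alpha e e' : adj alpha e' -> adj e' e -> dist_le 2 alpha e.
Proof. by move=> ae' e'e /=; right; exists e'; split => //; right; exists alpha. Qed.

Lemma calL_line_through T s t r d : block L' T -> block L' (perpA L' T) ->
  f s \in T -> f r \in T -> s != r -> t \in perpA L' T -> d \in perpA L' T -> t != d ->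
  exists2 Ls, calL_line Ls & (pairPt s t \in Ls) && (pairPt r d \in Ls).
Proof.
move=> bT bB sT rT sr tB dB td.
have [|e esr TE] := cards3P2 (block_card gqL' bT) sT rT; first by rewrite (inj_eq (iso_inj isoF)).
have [q qe] := iso_surj isoF e; subst e.
have [d3 d3td BE] := cards3P2 (block_card gqL' bB) tB dB td.
move: esr d3td; rewrite !inE !negb_or !(inj_eq (iso_inj isoF)) => /andP[qs qr] /andP[d3t d3d].
have Tsrq : T = f @: [set s; r; q] by rewrite TE !imsetU !imset_set1.
exists [set pairPt s t; pairPt r d; pairPt q d3]; last by rewrite !inE !eqxx ?orbT.
exists s, r, q, t, d, d3; split; first by split; rewrite // eq_sym.
split.
  move: bT; rewrite Tsrq (iso_block isoF) /block complete_triadE.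
  by case/orP; [left | right].
split; first by split; rewrite // eq_sym.
split; first by rewrite -Tsrq BE.
have [sB rB qB] : [/\ f s \in T, f r \in T & f q \in T] by rewrite TE !inE !eqxx ?orbT.
have d3B : d3 \in perpA L' T by rewrite BE !inE eqxx orbT.
have inB u v : f u \in T -> v \in perpA L' T -> inCalP u v by move=> uT /perpAP; apply.
by split => //; split; apply: inB.
Qed.

Lemma near_dist_le2 alpha s t : inPuP' alpha -> inCalP s t -> near alpha (pairPt s t) ->
  dist_le 2 alpha (pairPt s t).
Proof.
have finj := iso_inj isoF.
case: alpha => [[[]//|p]|p'] _ st /= near_st; rewrite /inCalP in st near_st.
  have [<- | sp] := eqVneq s p; first exact/dist_le2_adj/adj_leftPt.
  have fsp : f s != f p by rewrite (inj_eq finj).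
  have bB := block_perpA2 gqL' fsp; have [bT BBT] := block_perp gqL' bB.
  have tB : t \in perpA L' [set f s; f p] by rewrite in_perpA2 st.
  have [d dB dt] := cards3_other t (block_card gqL' bB).
  have /subsetP sT := sub_perpAK L' [set f s; f p].
  have sT' : f s \in perpA L' (perpA L' [set f s; f p]) by apply: sT; rewrite !inE eqxx.
  have pT' : f p \in perpA L' (perpA L' [set f s; f p]) by apply: sT; rewrite !inE eqxx orbT.
  rewrite -BBT in bB tB dB.
  have td : t != d by rewrite eq_sym.
  have [Ls lineLs /andP[stLs pdLs]] := calL_line_through bT bB sT' pT' sp tB dB td.
  apply: (dist_le2_adj2 (e' := pairPt p d)); first by apply: adj_leftPt; move/perpAP: dB; apply.
  by apply: (adj_calL_line lineLs) => //; apply: contraNneq sp => -[->].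
have [<- | tp] := eqVneq t p'; first exact/dist_le2_adj/adj_rightPt.
have bT := block_perpA2 gqL' tp; have [bB _] := block_perp gqL' bT.
have sT : f s \in perpA L' [set t; p'] by rewrite in_perpA2 -!(perp_sym _ (f s)) st.
have [e eT es] := cards3_other (f s) (block_card gqL' bT).
have [r re] := iso_surj isoF e; subst e.
have sr : s != r by apply: contraNneq es => <-.
have /subsetP BB := sub_perpAK L' [set t; p'].
have tB : t \in perpA L' (perpA L' [set t; p']) by apply: BB; rewrite !inE eqxx.
have pB : p' \in perpA L' (perpA L' [set t; p']) by apply: BB; rewrite !inE eqxx orbT.
have [Ls lineLs /andP[stLs rpLs]] := calL_line_through bT bB sT eT sr tB pB tp.
apply: (dist_le2_adj2 (e' := pairPt r p')).
  by apply: adj_rightPt; rewrite /inCalP perp_sym; move: eT; rewrite in_perpA2 => /andP[].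
by apply: (adj_calL_line lineLs) => //; apply: contraNneq tp => -[_ ->].
Qed.

Lemma calL_lineE Ls : calL_line Ls -> exists x y z u v w,
  [/\ [&& x != y, y != z & x != z], block L' (f @: [set x; y; z]),
      perpA L' (f @: [set x; y; z]) = [set u; v; w]
    & Ls = [set pairPt x u; pairPt y v; pairPt z w]].
Proof.
case=> [x [y [z [u [v [w [[xy yz xz] [lineT [_ [UE [_ ->]]]]]]]]]]].
exists x, y, z, u, v, w; split; rewrite ?xy ?yz ?xz //.
by rewrite (iso_block isoF) /block -complete_triadE; case: lineT => ->; rewrite ?orbT.
Qed.

Lemma card_calL_line Ls : calL_line Ls -> #|Ls| = 3.
Proof.
case/calL_lineE => [x [y [z [u [v [w [/and3P[xy yz xz] _ _ ->]]]]]]].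
by rewrite cards3 //; [move: xy | move: yz | move: xz]; apply: contraNneq => -[->].
Qed.

Lemma calL_line_pair Ls e : calL_line Ls -> e \in Ls -> exists s t, e = pairPt s t.
Proof.
case/calL_lineE => [x [y [z [u [v [w [_ _ _ ->]]]]]]].
by case/set3P=> ->; [exists x, u | exists y, v | exists z, w].
Qed.

Lemma calL_line_perp Ls s t s' t' : calL_line Ls ->
  pairPt s t \in Ls -> pairPt s' t' \in Ls -> t' \in perp L' (f s).
Proof.
case/calL_lineE => [x [y [z [u [v [w [_ _ UE ->]]]]]]].
have [xT yT zT] := set3_mem x y z; have [uU vU wU] := set3_mem u v w.
have inT q r : pairPt q r \in [set pairPt x u; pairPt y v; pairPt z w] ->
    f q \in f @: [set x; y; z] /\ r \in perpA L' (f @: [set x; y; z]).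
  by rewrite UE => /set3P[] [-> ->]; rewrite imset_f.
by move=> /inT[sT _] /inT[_ /perpAP]; apply.
Qed.

Lemma calL_line_near Ls alpha : calL_line Ls -> inPuP' alpha -> exists2 e, e \in Ls & near alpha e.
Proof.
case/calL_lineE => [x [y [z [u [v [w [_ bT UE ->]]]]]]].
have [xT yT zT] := set3_mem (pairPt x u) (pairPt y v) (pairPt z w).
case: alpha => [[[]//|p]|p'] _.
  have [bU _] := block_perp gqL' bT; rewrite UE in bU.
  have [t /set3P[]-> pt] := block_cover gqL' (f p) bU;
    [exists (pairPt x u) | exists (pairPt y v) | exists (pairPt z w)];
    by rewrite //= /inCalP perp_sym.
have [_ /imsetP[s /set3P[]-> ->] ps] := block_cover gqL' p' bT;
  by [exists (pairPt x u) | exists (pairPt y v) | exists (pairPt z w)].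
Qed.

Lemma calL_line_adj_near Ls alpha a c : calL_line Ls -> inPuP' alpha ->
  a \in Ls -> c \in Ls -> adj alpha c -> near alpha a.
Proof.
move=> lineLs alphaPP' aLs cLs.
have [s [t cE]] := calL_line_pair lineLs cLs; have [s' [t' aE]] := calL_line_pair lineLs aLs.
rewrite cE aE in aLs cLs *; case/(adj_pairPt alphaPP') => -> /=.
  exact: calL_line_perp lineLs cLs aLs.
exact: calL_line_perp lineLs aLs cLs.
Qed.
End Geometry.

Theorem proposition4p8 (P P' : finType) (L : {set {set P}}) (L' : {set {set P'}})
  (f : P -> P') :
  is_GQ22 L -> is_GQ22 L' -> is_iso L L' f ->
  forall (Ls : {set BPt P P'}), calL_line L L' f Ls ->
  forall alpha : BPt P P', inPuP' alpha ->
  forall a b c : BPt P P', a \in Ls -> b \in Ls -> c \in Ls ->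
  a != b -> c != a -> c != b ->
  Bdist L L' f alpha a 3 -> Bdist L L' f alpha b 3 ->
  Bdist L L' f alpha c 2.
Proof.
(* All quadrangle arguments take place in [S']. *)
move=> _ gqL' isoF Ls lineLs alpha alphaPP' a b c aLs bLs cLs ab ca cb [_ far_a] [_ far_b].
have not_near e : e \in Ls -> ~ dist_le L L' f 2 alpha e -> ~~ near L' f alpha e.
  move=> eLs nd; have [s [t eE]] := calL_line_pair isoF lineLs eLs; rewrite eE in eLs nd *.
  by apply/negP => /(near_dist_le2 gqL' isoF alphaPP' (calL_line_perp isoF lineLs eLs eLs)).
have [nnear_a nnear_b] := (not_near a aLs (far_a 2 isT), not_near b bLs (far_b 2 isT)).
have LsE : Ls = [set a; b; c].
  have abc : #|[set a; b; c]| = 3 by rewrite cards3 // eq_sym.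
  apply/eqP; rewrite eq_sym eqEcard (card_calL_line isoF lineLs) abc leqnn andbT.
  by apply/subsetP => e /set3P[]->.
have near_c : near L' f alpha c.
  have [e] := calL_line_near gqL' isoF lineLs alphaPP'.
  by rewrite LsE => /set3P[]->; rewrite ?(negbTE nnear_a) ?(negbTE nnear_b).
have [s [t cE]] := calL_line_pair isoF lineLs cLs.
split.
  by rewrite cE in cLs near_c *; apply: near_dist_le2 (calL_line_perp isoF lineLs cLs cLs) _.
case=> [|[|m]] // _ /=; first by move=> alpha_c; rewrite alpha_c cE in alphaPP'.
case=> [alpha_c | [e [<- adj_c]]]; first by rewrite alpha_c cE in alphaPP'.
by rewrite (calL_line_adj_near isoF lineLs alphaPP' aLs cLs adj_c) in nnear_a.
Qed.
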